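(* There is an $\mathrm{STC{+}C}$-formula $\varphi_D(p,x,z)$ over the vocabulary $\{E\}$ of graphs, with $p$ a number variable and $x,z$ structure variables, such that for every graph $G=(V,E)$, every $i\in N(G)=[0,|V|]$ and every vertex $v\in V$, the set $\{u\in V \mid G\models\varphi_D[i,v,u]\}$ is exactly the set $D_{i,v}$ of the modular decomposition of $G$.
   Context: Graphs are finite, simple, undirected, with nonempty vertex set; a graph is a structure $(V,E)$ with $E$ an irreflexive symmetric binary relation. A module of $G=(V,E)$ is a nonempty $M\subseteq V$ such that every $u\in V\setminus M$ is adjacent either to all or to none of the vertices of $M$. For a graph $G$ with $|V|>1$ and $v\in V$, $D_G(v)$ is: the connected component of $G$ containing $v$ if $G$ is disconnected; otherwise the connected component of the complement $\overline{G}$ containing $v$ if $\overline{G}$ is disconnected; otherwise (both $G,\overline{G}$ connected, in which case the maximal proper modules of $G$ partition $V$) the maximal proper module of $G$ containing $v$. If $|V|=1$, $D_G(v)=\{v\}$. With $n=|V|$, the modular decomposition of $G$ is the family $D_{i,v}$ ($i\in[0,n]$, $v\in V$) with $D_{0,v}=V$ and $D_{i+1,v}=D_{G[D_{i,v}]}(v)$, where $G[W]$ is the induced subgraph. Symmetric transitive closure logic with counting $\mathrm{STC{+}C}$ is the two-sorted logic in which a structure $A$ is augmented with a number sort $N(A)=[0,|U(A)|]$ (with its natural order), having structure variables and number variables, obtained from first-order logic by adding the atomic formulas $p\le q$ for number variables, counting formulas $\#\bar u\,\psi=\bar p$ (true iff the number of tuples $\bar u$ satisfying $\psi$ equals $\sum_j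 p_j(|U(A)|+1)^{j-1}$), and the symmetric transitive closure operator $[\mathrm{stc}_{\bar u,\bar v}\psi](\bar u',\bar v')$ (true iff $(\bar u',\bar v')$ lies in the symmetric transitive closure of the relation defined by $\psi$). *)

From mathcomp Require Import all_boot.
Set Implicit Arguments. Unset Strict Implicit. Unset Printing Implicit Defensive.

(* Graphs: a finite type V (nonempty) with an irreflexive symmetric     *)

Section ModDec.
Variables (V : finType) (E : rel V).

Definition restr (W : {set V}) : rel V := fun x y => [&& x \in W, y \in W & E x y].

Definition comp (W : {set V}) (v : V) : {set V} :=
  [set u in W | connect (restr W) v u].

Definition disconnected (W : {set V}) : bool :=
  [exists x in W, exists y in W, ~~ connect (restr W) x y].

Definition is_module (W M : {set V}) : bool :=
  [&& M != set0, M \subset W &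
      [forall u in W :\: M, [forall m in M, E u m] || [forall m in M, ~~ E u m]]].

Definition maxpropmod (W M : {set V}) : bool :=
  [&& is_module W M, M != W &
      [forall M' : {set V}, [&& is_module W M', M' != W & M \subset M'] ==> (M' == M)]].

End ModDec.

Definition compl (V : finType) (E : rel V) : rel V := fun x y => (x != y) && ~~ E x y.

Definition Dstep (V : finType) (E : rel V) (W : {set V}) (v : V) : {set V} :=
  if #|W| <= 1 then [set v]
  else if disconnected E W then comp E W v
  else if disconnected (compl E) W then comp (compl E) W v
  else odflt W [pick M | maxpropmod E W M && (v \in M)].

Definition Dmod (V : finType) (E : rel V) (i : nat) (v : V) : {set V} :=
  iter i (fun W => Dstep E W v) setT.

(* variables: inl x = structure variable x, inr p = number variable p *)
Definition var := (nat + nat)%type.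

Inductive formula : Type :=
  | FEq   of nat & nat                 (* x = y, structure variables *)
  | FEdge of nat & nat
  | FLe   of nat & nat                 (* p <= q, number variables *)
  | FNot  of formula
  | FAnd  of formula & formula
  | FExS  of nat & formula
  | FExN  of nat & formula
  | FCount of seq var & formula & seq nat
      (* FCount us psi ps :  # us psi = ps *)
  | FStc of seq var & seq var & formula & seq var & seq var.
      (* FStc us vs psi us' vs' :  [stc_{us,vs} psi](us', vs') *)

Fixpoint fv (f : formula) : seq var :=
  match f with
  | FEq x y | FEdge x y => [:: inl x; inl y]
  | FLe p q => [:: inr p; inr q]
  | FNot g => fv g
  | FAnd g h => fv g ++ fv h
  | FExS x g => [seq w <- fv g | w != inl x]
  | FExN p g => [seq w <- fv g | w != inr p]
  | FCount us g ps => [seq w <- fv g | w \notin us] ++ map inr ps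
  | FStc us vs g us' vs' => [seq w <- fv g | w \notin us ++ vs] ++ us' ++ vs'
  end.

Section Semantics.
Variables (V : finType) (E : rel V).

(* the number sort N(G) = [0, |V|] *)
Definition num := 'I_(#|V|).+1.
Definition dval := (V + num)%type.

Definition upd {T : Type} (f : nat -> T) (x : nat) (a : T) : nat -> T :=
  fun y => if y == x then a else f y.

Definition sortmatch (u : var) (a : dval) : bool :=
  match u, a with inl _, inl _ => true | inr _, inr _ => true | _, _ => false end.

Definition wellsorted (us : seq var) (t : seq dval) : bool := all2 sortmatch us t.

Definition assign1 (u : var) (a : dval) (sa : nat -> V) (na : nat -> num)
  : (nat -> V) * (nat -> num) :=
  match u, a with
  | inl x, inl v => (upd sa x v, na)
  | inr p, inr k => (sa, upd na p k)
  | _, _ => (sa, na)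
  end.

Fixpoint assign (us : seq var) (t : seq dval) (sa : nat -> V) (na : nat -> num)
  : (nat -> V) * (nat -> num) :=
  match us, t with
  | u :: us', a :: t' => let st := assign1 u a sa na in assign us' t' st.1 st.2
  | _, _ => (sa, na)
  end.

Definition vals (us : seq var) (sa : nat -> V) (na : nat -> num) : seq dval :=
  map (fun u => match u with inl x => inl (sa x) | inr p => inr (na p) end) us.

(* relational symmetric transitive closure (paths of length >= 1 in R u R^-1) *)
Definition stc_rel (T : finType) (R : rel T) (a b : T) : bool :=
  [exists c, (R a c || R c a) && connect (fun x y => R x y || R y x) c b].

Fixpoint eval (f : formula) (sa : nat -> V) (na : nat -> num) : bool :=
  match f with
  | FEq x y => sa x == sa y
  | FEdge x y => E (sa x) (sa y)
  | FLe p q => (na p <= na q)%N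
  | FNot g => ~~ eval g sa na
  | FAnd g h => eval g sa na && eval h sa na
  | FExS x g => [exists a : V, eval g (upd sa x a) na]
  | FExN p g => [exists k : num, eval g sa (upd na p k)]
  | FCount us g ps =>
      #|[pred t : (size us).-tuple dval |
          wellsorted us t && eval g (assign us t sa na).1 (assign us t sa na).2]|
      == \sum_(j < size ps) (na (nth 0 ps j) : nat) * (#|V|).+1 ^ j
  | FStc us vs g us' vs' =>
      let R : rel ((size us).-tuple dval) := fun a b =>
        [&& wellsorted us a, wellsorted vs b &
            let s1 := assign us a sa na in
            let s2 := assign vs b s1.1 s1.2 in eval g s2.1 s2.2] in
      [exists a : (size us).-tuple dval, exists b : (size us).-tuple dval,
         [&& val a == vals us' sa na, val b == vals vs' sa na & stc_rel R a b]]
  end.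

End Semantics.

(* Let M(x, y) be the least module containing x and y.  It is definable with
   symmetric transitive closure: for an edge xy it is the set of vertices
   reachable from the pair (x, y) by the rule (a, b) -> (a, c), for an edge ac
   and a non-edge bc, since a module containing a and b must contain c; for a
   non-edge one works in the complement graph.  If w <> v lies in D_l but not
   in D_(l+1), then D_l = {y | w in M(v, y) -> y in M(v, w)}, and every D_l
   arises in this way from some w (from w = v when D_l = {v}).  While the D_l
   have more than one element their sizes strictly decrease, so the index l of
   such a set is the number of sizes of these sets exceeding its own; this is
   expressed with counting.  Hence u is in D_(i,v) iff u = v or u lies in one of
   these sets whose index is at least i. *)

From Pilot Require Import Defs.
From mathcomp Require Import all_boot zify.
Set Implicit Arguments. Unset Strict Implicit. Unset Printing Implicit Defensive.

Notation component := Defs.comp.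

(** * Modules *)

Section Modules.
Variable V : finType.
Implicit Types (e : rel V) (W T P : {set V}).

Definition modular e W T : Prop :=
  T \subset W /\
  forall u m m', u \in W -> u \notin T -> m \in T -> m' \in T -> e u m = e u m'.

Lemma modular_compl (E : rel V) W T : modular (compl E) W T <-> modular E W T.
Proof.
have compl_eq u m m' : u \notin T -> m \in T -> m' \in T ->
    (compl E u m = compl E u m') <-> (E u m = E u m').
  move=> uT mT m'T; rewrite /compl.
  have -> : u != m by apply: contraNneq uT => ->.
  have -> : u != m' by apply: contraNneq uT => ->.
  by split=> [/negb_inj|->].
by split=> -[TW Tmod]; split=> // u m m' uW uT mT m'T; apply/compl_eq => //; exact: Tmod.
Qed.

Lemma is_moduleP (E : rel V) W M : is_module E W M <-> M != set0 /\ modular E W M.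
Proof.
split.
  case/and3P => M0 MW /forall_inP Mmod; split=> //; split=> // u m m' uW uM mM m'M.
  have /orP[/forall_inP Eu | /forall_inP nEu] :
      [forall m in M, E u m] || [forall m in M, ~~ E u m] by apply: Mmod; rewrite inE uM.
    by rewrite !Eu.
  by rewrite (negbTE (nEu _ mM)) (negbTE (nEu _ m'M)).
case=> M0 [MW Mmod]; apply/and3P; split=> //.
apply/forall_inP => u /setDP[uW uM]; have /set0Pn[m0 m0M] := M0.
by case: (boolP (E u m0)) => Eu0; apply/orP; [left|right];
  apply/forall_inP => m mM; rewrite (Mmod u m m0).
Qed.

Lemma modular_restrict e W T : modular e setT T -> T \subset W -> modular e W T.
Proof. by case=> _ Tmod TW; split=> // u m m' _; apply: Tmod. Qed.

Lemma modular_lift e W T : modular e setT W -> modular e W T -> modular e setT T.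
Proof.
case=> _ Wmod [TW Tmod]; split=> [|u m m' _ uT mT m'T]; first exact: subsetT.
by case: (boolP (u \in W)) => uW; [exact: Tmod | apply: Wmod => //; apply: (subsetP TW)].
Qed.

Lemma modularU e W T P x :
  modular e W T -> modular e W P -> x \in T -> x \in P -> modular e W (T :|: P).
Proof.
case=> TW Tmod [PW Pmod] xT xP; split; first by rewrite subUset TW PW.
move=> u m m' uW; rewrite inE negb_or => /andP[uT uP].
have eux z : z \in T :|: P -> e u z = e u x.
  by case/setUP => [zT|zP]; [exact: Tmod | exact: Pmod].
by move=> /eux -> /eux ->.
Qed.

Lemma modular1 e W v : v \in W -> modular e W [set v].
Proof. by move=> vW; split=> [|u m m' _ _ /set1P-> /set1P->]; rewrite ?sub1set. Qed.

Lemma modularT e : modular e setT setT.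
Proof. by split=> // u m m' _; rewrite inE. Qed.

Lemma compl_sym e : symmetric e -> symmetric (compl e).
Proof. by move=> e_sym x y; rewrite /compl eq_sym e_sym. Qed.

Lemma restr_sym e W : symmetric e -> symmetric (restr e W).
Proof. by move=> e_sym x y; rewrite /restr e_sym andbCA. Qed.

Lemma component_sub e W a : component e W a \subset W.
Proof. by apply/subsetP => x /setIdP[]. Qed.

Lemma component_id e W a : a \in W -> a \in component e W a.
Proof. by move=> aW; rewrite inE aW connect0. Qed.

Section Components.
Variables (e : rel V) (W : {set V}).
Hypothesis e_sym : symmetric e.

Lemma modular_componentU a b : modular e W (component e W a :|: component e W b).
Proof.
split; first by rewrite subUset !component_sub.
suff no_edge u m : u \in W -> u \notin component e W a :|: component e W b ->
    m \in component e W a :|: component e W b -> e u m = false.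
  by move=> u m m' uW uC mC m'C; rewrite !no_edge.
move=> uW; rewrite !inE !negb_or uW /= => /andP[ua ub].
by case/orP=> /andP[mW cm]; apply/negP => eum;
  [move/negP: ua | move/negP: ub]; apply; apply: connect_trans cm (connect1 _);
  rewrite /restr mW uW e_sym.
Qed.

(* An edge from [x] in [T] to [y] outside [T] gives an edge [yt], so the
   component of [t0] cannot leave [T] without reaching [t]. *)
Lemma component_sub_modular T t0 t : modular e W T -> t0 \in T -> t \in T ->
  t \notin component e W t0 -> component e W t0 \subset T.
Proof.
case=> TW Tmod t0T tT tC.
have leave x y : x \in T -> y \notin T -> restr e W x y -> ~~ connect (restr e W) t0 x.
  move=> xT yT /and3P[xW yW exy]; apply: contra tC => cx.
  have eyt : e y t by rewrite -(Tmod y x t) // e_sym.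
  have rxy : restr e W x y by rewrite /restr xW yW exy.
  have ryt : restr e W y t by rewrite /restr yW (subsetP TW) // eyt.
  by rewrite inE (subsetP TW) //= (connect_trans (connect_trans cx (connect1 rxy)) (connect1 ryt)).
pose Q := [pred z | (z \in T) || ~~ connect (restr e W) t0 z].
have Qclosed : closed (restr e W) Q.
  move=> x y rxy; have rs := restr_sym W e_sym; rewrite !inE.
  have -> : connect (restr e W) t0 x = connect (restr e W) t0 y.
    by apply/idP/idP => h; apply: connect_trans h (connect1 _); rewrite // rs.
  case: (boolP (connect _ t0 y)) => cy; rewrite ?orbT //= !orbF.
  apply/idP/idP => [xT|yT]; apply/negPn/negP => nT.
    by have := leave x y xT nT rxy; rewrite (connect_trans cy) // connect1 // rs.
  by have := leave y x yT nT; rewrite rs rxy cy => /(_ isT).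
apply/subsetP => c /setIdP[_ ctc].
by have := closed_connect Qclosed ctc; rewrite !inE t0T ctc /= orbF => <-.
Qed.

Lemma disconnected_cut (A : {set V}) a b : a \in W -> b \in W -> a \in A -> b \notin A ->
  (forall x y, x \in W -> y \in W -> x \in A -> y \notin A -> e x y = false) ->
  disconnected e W.
Proof.
move=> aW bW aA bA noedge; apply/existsP; exists a; rewrite aW /=.
apply/existsP; exists b; rewrite bW /=; apply/negP => cab.
have Aclosed : closed (restr e W) (mem A).
  move=> x y /and3P[xW yW exy] /=.
  case: (boolP (x \in A)) => xA; case: (boolP (y \in A)) => yA //.
    by rewrite noedge in exy.
  by rewrite e_sym noedge in exy.
by have := closed_connect Aclosed cab; rewrite /= aA (negbTE bA).
Qed.

End Components.

Lemma modular_cover_disconnected (E : rel V) W T P : symmetric E ->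
  modular E W T -> modular E W P -> T :|: P = W -> ~~ (T \subset P) -> ~~ (P \subset T) ->
  disconnected E W || disconnected (compl E) W.
Proof.
move=> E_sym [TW Tmod] [PW Pmod] UW /subsetPn[a aT aP] /subsetPn[b bP bT].
have aW : a \in W by rewrite -UW inE aT.
have bW : b \in W by apply: (subsetP PW).
have cross x y : x \in W -> x \notin P -> y \in P -> E x y = E b a.
  move=> xW xP yP; have xT : x \in T by move: xW; rewrite -UW inE (negbTE xP) orbF.
  by rewrite (Pmod x y b) // E_sym (Tmod b x a).
have inP y : y \in W -> y \notin W :\: P -> y \in P by move=> yW; rewrite inE yW andbT negbK.
have aWP : a \in W :\: P by rewrite inE aP aW.
have bWP : b \notin W :\: P by rewrite inE bP.
apply/orP; case Eba : (E b a); [right | left].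
  apply: (disconnected_cut (compl_sym E_sym) aW bW aWP bWP) => x y xW yW.
  by rewrite inE xW andbT /compl => xP /(inP _ yW) yP; rewrite cross // Eba andbF.
apply: (disconnected_cut E_sym aW bW aWP bWP) => x y xW yW.
by rewrite inE xW andbT => xP /(inP _ yW) yP; rewrite cross.
Qed.

End Modules.

(** * The least module containing two vertices *)

Section EdgeClosure.
Variables (V : finType) (e : rel V).
Hypothesis e_sym : symmetric e.

Definition edge_step (p q : V * V) : bool :=
  [&& e p.1 p.2, e q.1 q.2 &
      [&& p.1 == q.1, p.2 != q.2 & ~~ e p.2 q.2] || (p.1 == q.2) && (p.2 == q.1)].

Definition edge_closure (x y : V) : {set V} :=
  [set z | [|| z == x, z == y | [exists t, connect edge_step (x, y) (z, t)]]].

Lemma edge_step_sym : symmetric edge_step.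
Proof.
move=> [a b] [c d]; rewrite /edge_step /= andbCA (eq_sym c a) (eq_sym d b) (e_sym d b).
by rewrite (eq_sym c b) (eq_sym d a) (andbC (b == c)).
Qed.

Lemma edge_step_swap a b : e a b -> edge_step (a, b) (b, a).
Proof. by move=> eab; rewrite /edge_step /= eab e_sym eab !eqxx orbT. Qed.

Lemma edge_closure_l x y : x \in edge_closure x y.
Proof. by rewrite inE eqxx. Qed.

Lemma edge_closure_r x y : y \in edge_closure x y.
Proof. by rewrite inE eqxx orbT. Qed.

Lemma edge_closure_min x y (T : {set V}) :
  x \in T -> y \in T -> modular e setT T -> edge_closure x y \subset T.
Proof.
move=> xT yT [_ Tmod].
pose Q := [pred p : V * V | (p.1 \in T) && (p.2 \in T)].
have Qstep p q : edge_step p q -> p \in Q -> q \in Q.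
  case: p q => [a b] [c d]; rewrite /edge_step !inE /= => /and3P[_ ecd step] /andP[aT bT].
  case/orP: step => [/and3P[/eqP ac _ nebd] | /andP[/eqP<- /eqP<-]]; last by rewrite aT bT.
  subst c; rewrite aT; apply/negPn/negP => dT.
  by move: nebd; rewrite e_sym -(Tmod d a b) // e_sym ecd.
have Qclosed : closed edge_step Q.
  by move=> p q pq; apply/idP/idP; apply: Qstep; rewrite // edge_step_sym.
apply/subsetP => z; rewrite inE => /or3P[/eqP-> // | /eqP-> // | /existsP[t c]].
by have := closed_connect Qclosed c; rewrite !inE /= xT yT => /esym/andP[].
Qed.

Section Reachable.
Variables (x y : V).
Hypothesis exy : e x y.

Local Notation reach := (connect edge_step (x, y)).

Lemma reach_edge p : reach p -> e p.1 p.2.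
Proof.
have edge_closed : closed edge_step [pred p : V * V | e p.1 p.2].
  by move=> p1 p2 /and3P[e1 e2 _]; rewrite !inE e1 e2.
by move=> xyp; have := closed_connect edge_closed xyp; rewrite !inE /= exy => <-.
Qed.

Lemma reach_step p q : reach p -> edge_step p q -> reach q.
Proof. by move=> xyp pq; apply: connect_trans xyp (connect1 pq). Qed.

Lemma reach_swap a b : reach (a, b) -> reach (b, a).
Proof. by move=> xyab; apply: reach_step xyab (edge_step_swap (reach_edge xyab)). Qed.

Lemma reach_mem a b : reach (a, b) -> a \in edge_closure x y.
Proof. by move=> xyab; rewrite inE; apply/or3P/Or33/existsP; exists b. Qed.

Variable u : V.
Hypothesis uX : u \notin edge_closure x y.

(* An edge [ua] with [ub] a non-edge would make [(a, u)] reachable. *)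
Lemma reach_uniform p : reach p -> e u p.1 = e u p.2.
Proof.
have edge_to a b : reach (a, b) -> e u a -> e u b.
  move=> xyab eua; apply/negPn/negP => neub.
  have bu : b != u by apply: contraNneq uX => <-; apply: reach_mem (reach_swap xyab).
  move/negP: uX; apply; apply: (@reach_mem u a); apply: reach_swap; apply: (reach_step xyab).
  by rewrite /edge_step /= (reach_edge xyab) (e_sym a u) eua eqxx bu (e_sym b u) neub.
case: p => a b xyab /=; apply/idP/idP; first exact: edge_to.
exact: edge_to (reach_swap xyab).
Qed.

Lemma reach_fst p : reach p -> e u p.1 = e u x.
Proof.
pose Q := [pred p : V * V | reach p ==> (e u p.1 == e u x)].
have Qclosed : closed edge_step Q.
  move=> p1 p2 p12; rewrite !inE.
  have -> : reach p1 = reach p2.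
    by apply/idP/idP => xyp; apply: reach_step xyp _; rewrite // edge_step_sym.
  case: (boolP (reach p2)) => //= xyp2.
  have xyp1 : reach p1 by apply: (reach_step xyp2); rewrite edge_step_sym.
  case/and3P: p12 => _ _ /orP[/and3P[/eqP-> _ _] | /andP[_ /eqP<-]] //.
  by rewrite (reach_uniform xyp1).
by move=> xyp; have := closed_connect Qclosed xyp; rewrite !inE /= eqxx implybT xyp => /esym/eqP.
Qed.

End Reachable.

Lemma edge_closure_modular x y : e x y -> modular e setT (edge_closure x y).
Proof.
move=> exy; split=> [|u m m' _ uX]; first exact: subsetT.
have eux z : z \in edge_closure x y -> e u z = e u x.
  rewrite inE => /or3P[/eqP-> // | /eqP-> | /existsP[t xyzt]].
    by rewrite (reach_uniform exy uX (connect0 _ (x, y))).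
  exact: (reach_fst exy uX xyzt).
by move=> /eux -> /eux ->.
Qed.

End EdgeClosure.

Section Span.
Variables (V : finType) (E : rel V).
Hypothesis E_sym : symmetric E.

(* Modules of [E] and of [compl E] coincide, so a non-edge [xy] is handled in
   the complement. *)
Definition mspan (x y : V) : {set V} :=
  if x == y then [set x]
  else if E x y then edge_closure E x y else edge_closure (compl E) x y.

Lemma mspan_l x y : x \in mspan x y.
Proof.
by rewrite /mspan; case: eqP => _; [rewrite set11 | case: ifP => _; apply: edge_closure_l].
Qed.

Lemma mspan_r x y : y \in mspan x y.
Proof.
rewrite /mspan; case: eqP => [->|_]; first by rewrite set11.
by case: ifP => _; apply: edge_closure_r.
Qed.

Lemma mspan_modular x y : modular E setT (mspan x y).
Proof.
rewrite /mspan; case: eqP => [_|/eqP nxy]; first exact: modular1.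
case: ifP => exy; first exact: edge_closure_modular.
apply/modular_compl/edge_closure_modular; first exact: (compl_sym E_sym).
by rewrite /compl nxy exy.
Qed.

Lemma mspan_min x y T : modular E setT T -> x \in T -> y \in T -> mspan x y \subset T.
Proof.
move=> Tmod xT yT; rewrite /mspan; case: eqP => _; first by rewrite sub1set.
case: ifP => _; first exact: edge_closure_min.
by apply: edge_closure_min => //; [exact: (compl_sym E_sym) | rewrite modular_compl].
Qed.

End Span.

(** * One step and all levels of the modular decomposition *)

Section DecompositionStep.
Variables (V : finType) (E : rel V) (W : {set V}) (v : V).
Hypotheses (E_sym : symmetric E) (vW : v \in W) (Wmod : modular E setT W).

Record step_spec (W' : {set V}) : Prop := StepSpec {
  step_mem : v \in W';
  step_proper : W' \proper W;
  step_modular : modular E setT W';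
  step_least : forall T, modular E setT T -> v \in T -> T \subset W ->
    ~~ (T \subset W') -> W' \subset T;
  step_mspan : forall w y, w \in W :\: W' -> y \in W :\: W' ->
    w \in mspan E v y -> y \in mspan E v w }.

Lemma component_step_spec (e : rel V) : symmetric e ->
  (forall T, modular e W T <-> modular E W T) ->
  disconnected e W -> step_spec (component e W v).
Proof.
move=> e_sym e_mod dis; have csym := sym_connect_sym (restr_sym W e_sym).
have compU_mod a b : modular E setT (component e W a :|: component e W b).
  by apply: (modular_lift Wmod); apply/e_mod/modular_componentU.
split.
- exact: component_id.
- rewrite properEneq component_sub andbT; apply/eqP => Cv.
  case/existsP: dis => x /andP[xW /existsP[y /andP[yW]]].
  move: xW yW; rewrite -{1 2}Cv !inE => /andP[_ cx] /andP[_ cy].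
  by rewrite (connect_trans _ cy) // csym.
- by rewrite -[component _ _ _]setUid.
- move=> T Tmod vT TW /subsetPn[t tT tC].
  by apply: component_sub_modular vT tT tC => //; apply/e_mod/modular_restrict.
- move=> w y /setDP[wW wC] /setDP[yW yC] wM.
  have vU : v \in component e W v :|: component e W y by rewrite inE component_id.
  have yU : y \in component e W v :|: component e W y by rewrite inE component_id ?orbT.
  have /setUP[|] := subsetP (mspan_min E_sym (compU_mod v y) vU yU) w wM.
    by rewrite (negbTE wC).
  rewrite inE wW /= => cyw.
  have vC : v \notin component e W w by apply: contra wC; rewrite !inE vW wW csym.
  have wmod := modular_restrict (mspan_modular E_sym v w) (mspan_min E_sym Wmod vW wW).
  have /subsetP := component_sub_modular e_sym (proj2 (e_mod _) wmod)
    (mspan_r _ v w) (mspan_l _ v w) vC.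
  by apply; rewrite inE yW csym.
Qed.

Hypothesis W2 : 1 < #|W|.

Lemma maxpropmod_step_spec P : ~~ disconnected E W -> ~~ disconnected (compl E) W ->
  maxpropmod E W P -> v \in P -> step_spec P.
Proof.
move=> con ccon /and3P[/is_moduleP[P0 PWmod] PW /forallP Pmax] vP.
have Pmax_mod T : modular E W T -> v \in T -> T != W -> P \subset T -> T = P.
  move=> Tmod vT TW PT; apply/eqP/(implyP (Pmax T)); rewrite TW PT /= andbT.
  by apply/is_moduleP; split=> //; apply/set0Pn; exists v.
have least T : modular E setT T -> v \in T -> T \subset W -> ~~ (T \subset P) -> P \subset T.
  move=> Tmod vT TW TP; have TWmod := modular_restrict Tmod TW.
  have UW : T :|: P = W.
    apply: contraNeq (TP) => TPW; have vTP : v \in T :|: P by rewrite inE vT.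
    by rewrite -(Pmax_mod _ (modularU TWmod PWmod vT vP) vTP TPW (subsetUr _ _)) subsetUl.
  apply/negPn/negP => PT.
  have := modular_cover_disconnected E_sym TWmod PWmod UW TP PT.
  by rewrite (negbTE con) (negbTE ccon).
split=> //.
- by case: PWmod => PsubW _; rewrite properEneq PW PsubW.
- exact: modular_lift Wmod PWmod.
move=> w y /setDP[wW wP] /setDP[yW _] _.
have PM : P \subset mspan E v w.
  apply: least (mspan_modular E_sym v w) (mspan_l _ v w) (mspan_min E_sym Wmod vW wW) _.
  by apply/subsetPn; exists w; rewrite ?mspan_r.
have MW : mspan E v w = W.
  apply: contraNeq (wP) => MW; rewrite -(Pmax_mod _ _ (mspan_l _ v w) MW PM) ?mspan_r //.
  exact: modular_restrict (mspan_modular E_sym v w) (mspan_min E_sym Wmod vW wW).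
by rewrite MW.
Qed.

Lemma exists_maxpropmod : exists P, maxpropmod E W P && (v \in P).
Proof.
pose propmod_v M := [&& is_module E W M, M != W & v \in M].
have propmod_v1 : propmod_v [set v].
  rewrite /propmod_v set11 andbT; apply/andP; split.
    by apply/is_moduleP; split; [apply/set0Pn; exists v; rewrite set11 | exact: modular1].
  by apply: contraTneq W2 => <-; rewrite cards1.
case: (arg_maxnP (fun M : {set V} => #|M|) propmod_v1) => M /and3P[Mmod MW vM] Mmax.
exists M; rewrite vM andbT; apply/and3P; split=> //.
apply/forallP => M'; apply/implyP => /and3P[M'mod M'W MM'].
rewrite eq_sym eqEcard MM'; apply: Mmax; rewrite /propmod_v M'mod M'W.
exact: (subsetP MM').
Qed.

Lemma Dstep_spec : step_spec (Dstep E W v).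
Proof.
rewrite /Dstep leqNgt W2 /=.
case: ifP => [dis|/negbT con]; first by apply: component_step_spec.
case: ifP => [cdis|/negbT ccon].
  apply: component_step_spec cdis; first exact: (compl_sym E_sym).
  by move=> T; apply: modular_compl.
case: pickP => [P /andP[Pmax vP]|none]; first exact: maxpropmod_step_spec.
by have [P] := exists_maxpropmod; rewrite none.
Qed.

End DecompositionStep.

Lemma ex_last_true (P : nat -> bool) n : P 0 -> ~~ P n -> exists2 l, l < n & P l && ~~ P l.+1.
Proof.
elim: n => [-> //|n IH] P0 Pn.
case: (boolP (P n)) => Pn'; first by exists n => //; rewrite Pn'.
by have [l ln Pl] := IH P0 Pn'; exists l => //; apply: ltnW.
Qed.

Section Levels.
Variables (V : finType) (E : rel V) (v : V).
Hypothesis E_sym : symmetric E.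

Local Notation D l := (Dmod E l v).

Lemma mem_Dmod_modular l : v \in D l /\ modular E setT (D l).
Proof.
elim: l => [|l [vD Dl_mod]]; first by split; [rewrite inE | exact: modularT].
rewrite /Dmod iterS -/(Dmod E l v); case: (leqP #|D l| 1) => [D1|D2].
  by rewrite /Dstep D1 set11; split=> //; apply: modular1; rewrite inE.
by have [] := Dstep_spec E_sym vD Dl_mod D2.
Qed.

Lemma mem_Dmod l : v \in D l. Proof. by case: (mem_Dmod_modular l). Qed.
Lemma Dmod_modular l : modular E setT (D l). Proof. by case: (mem_Dmod_modular l). Qed.

Lemma Dmod_step_spec l : 1 < #|D l| -> step_spec E (D l) v (D l.+1).
Proof.
by rewrite /Dmod iterS; apply: Dstep_spec => //; [exact: mem_Dmod | exact: Dmod_modular].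
Qed.

Lemma Dmod_small l : #|D l| <= 1 -> D l = [set v].
Proof. by move=> D1; apply/eqP; rewrite eq_sym eqEcard sub1set mem_Dmod cards1. Qed.

Lemma Dmod_succ_small l : #|D l| <= 1 -> D l.+1 = D l.
Proof. by move=> D1; rewrite /Dmod iterS -/(Dmod E l v) /Dstep D1 Dmod_small. Qed.

Lemma Dmod_succ_sub l : D l.+1 \subset D l.
Proof.
case: (leqP #|D l| 1) => [/Dmod_succ_small-> // | /Dmod_step_spec/step_proper].
by case/properP.
Qed.

Lemma Dmod_sub l l' : l <= l' -> D l' \subset D l.
Proof.
elim: l' => [|l' IH]; first by rewrite leqn0 => /eqP->.
rewrite leq_eqVlt => /predU1P[-> //|ll'].
exact: subset_trans (Dmod_succ_sub l') (IH ll').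
Qed.

Lemma card_Dmod_succ l : 1 < #|D l| -> #|D l.+1| < #|D l|.
Proof. by move/Dmod_step_spec/step_proper/proper_card. Qed.

Lemma card_Dmod_leq l l' : l <= l' -> #|D l'| <= #|D l|.
Proof. by move/Dmod_sub/subset_leq_card. Qed.

Lemma card_Dmod_ltn l l' : l < l' -> 1 < #|D l'| -> #|D l'| < #|D l|.
Proof.
move=> ll' Dl'2; have Dl2 : 1 < #|D l| by apply: leq_trans Dl'2 (card_Dmod_leq (ltnW ll')).
exact: leq_ltn_trans (card_Dmod_leq ll') (card_Dmod_succ Dl2).
Qed.

Lemma card_Dmod_add l : 1 < #|D l| -> #|D l| + l <= #|V|.
Proof.
elim: l => [|l IH] Dl2; first by rewrite addn0 max_card.
have Dl2' : 1 < #|D l| by apply: leq_trans Dl2 (card_Dmod_leq (leqnSn l)).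
by rewrite addnS; apply: leq_trans (IH Dl2'); rewrite ltn_add2r card_Dmod_succ.
Qed.

Lemma Dmod_end : D #|V| = [set v].
Proof.
apply: Dmod_small; rewrite leqNgt; apply/negP => DV2.
by have := card_Dmod_add DV2; lia.
Qed.

Lemma card_Dmod_gt1 l y : y \in D l -> v != y -> 1 < #|D l|.
Proof. by move=> yl vy; apply/card_gt1P; exists v, y; rewrite mem_Dmod. Qed.

Lemma mspan_sub_Dmod l y : y \in D l -> mspan E v y \subset D l.
Proof. by apply: mspan_min => //; [exact: Dmod_modular | exact: mem_Dmod]. Qed.

Lemma Dmod_succ_sub_mspan l y : y \in D l -> y \notin D l.+1 -> D l.+1 \subset mspan E v y.
Proof.
move=> yl yl1; have vy : v != y by apply: contraNneq yl1 => <-; exact: mem_Dmod.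
have Dl2 := card_Dmod_gt1 yl vy.
apply: (step_least (Dmod_step_spec Dl2) (mspan_modular E_sym v y) (mspan_l _ v y)).
  exact: mspan_sub_Dmod.
by apply/subsetPn; exists y; rewrite ?mspan_r.
Qed.

Definition Dlevel w : {set V} := [set y | (w \in mspan E v y) ==> (y \in mspan E v w)].

Lemma Dlevel_Dmod l w : w \in D l -> w \notin D l.+1 -> Dlevel w = D l.
Proof.
move=> wl wl1; apply/setP => y; rewrite inE.
case: (boolP (y \in D l)) => yl.
  case: (boolP (y \in D l.+1)) => yl1.
    by apply/implyP => /(subsetP (mspan_sub_Dmod yl1)); rewrite (negbTE wl1).
  have vw : v != w by apply: contraNneq wl1 => <-; exact: mem_Dmod.
  have Dl2 := card_Dmod_gt1 wl vw.
  by apply/implyP; apply: (step_mspan (Dmod_step_spec Dl2)); rewrite inE ?wl1 ?yl1.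
have [l' l'l /andP[yl' yl'1]] := ex_last_true (P := fun k => y \in D k) (in_setT y) yl.
apply/negbTE; rewrite negb_imply (subsetP (Dmod_succ_sub_mspan yl' yl'1)) /=; last first.
  exact: (subsetP (Dmod_sub l'l)).
by apply: contra yl => /(subsetP (mspan_sub_Dmod wl)).
Qed.

Lemma Dlevel_v : Dlevel v = [set v].
Proof.
apply/setP => y; rewrite !inE mspan_l /= /mspan eqxx inE.
by apply/eqP/eqP.
Qed.

Lemma Dlevel_exists w : exists l, Dlevel w = D l.
Proof.
case: (eqVneq w v) => [->|wv]; first by exists #|V|; rewrite Dlevel_v Dmod_end.
have wn : w \notin D #|V| by rewrite Dmod_end inE.
have [l _ /andP[wl wl1]] := ex_last_true (P := fun k => w \in D k) (in_setT w) wn.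
by exists l; apply: Dlevel_Dmod.
Qed.

Lemma Dmod_exists l : exists w, Dlevel w = D l.
Proof.
case: (leqP #|D l| 1) => [D1|/Dmod_step_spec/step_proper/properP[_ [w wl wl1]]].
  by exists v; rewrite Dlevel_v Dmod_small.
by exists w; apply: Dlevel_Dmod.
Qed.

Definition Dlevel_rank w :=
  #|[pred q : num V | [exists w', #|Dlevel w'| == q] && (#|Dlevel w| < q)]|.

Lemma Dlevel_rank_le w : Dlevel_rank w <= #|V|.
Proof.
apply: leq_trans (_ : #|predC1 (ord0 : num V)| <= _); last by rewrite cardC1 card_ord.
apply/subset_leq_card/subsetP => q /andP[_ lt]; rewrite !inE.
by apply: contraTneq lt => ->.
Qed.

Lemma Dlevel_rank_Dmod w l : Dlevel w = D l -> 1 < #|D l| -> Dlevel_rank w = l.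
Proof.
move=> wl Dl2; pose g (j : 'I_l) : num V := inord #|D j|.
have gK j : g j = #|D j| :> nat by rewrite inordK // ltnS max_card.
have ginj : injective g.
  move=> j j'; move/(congr1 val); rewrite /= !gK => eqD; apply/val_inj => /=.
  have Dj2 (k : 'I_l) : 1 < #|D k| by apply: leq_trans Dl2 (card_Dmod_leq (ltnW (ltn_ord k))).
  case: (ltngtP j j') => // jj'.
    by have := card_Dmod_ltn jj' (Dj2 j'); rewrite eqD ltnn.
  by have := card_Dmod_ltn jj' (Dj2 j); rewrite eqD ltnn.
rewrite -[RHS](card_ord l) -cardsT -(card_imset _ ginj); apply: eq_card => q; rewrite !inE wl.
apply/andP/imsetP => [[/existsP[w' /eqP qw'] lt] | [j _ ->]].
  have [j wj] := Dlevel_exists w'; rewrite -qw' wj in lt.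
  have jl : j < l by rewrite ltnNge; apply: contraTN lt => /card_Dmod_leq; rewrite leqNgt.
  by exists (Ordinal jl) => //; apply/val_inj; rewrite /= gK -qw' wj.
have [w' w'j] := Dmod_exists j.
by split; [apply/existsP; exists w'; rewrite w'j gK | rewrite gK card_Dmod_ltn].
Qed.

Lemma mem_Dmod_Dlevel i u :
  (u \in D i) = (v == u) || [exists w, (u \in Dlevel w) && (i <= Dlevel_rank w)].
Proof.
apply/idP/orP => [ui|[/eqP<-|/existsP[w /andP[uw iw]]]]; last 2 first.
- exact: mem_Dmod.
- have [l wl] := Dlevel_exists w; rewrite wl in uw.
  case: (leqP #|D l| 1) => [/Dmod_small Dl1|Dl2].
    by move: uw; rewrite Dl1 => /set1P->; apply: mem_Dmod.
  by rewrite (Dlevel_rank_Dmod wl Dl2) in iw; apply: (subsetP (Dmod_sub iw)).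
case: (eqVneq v u) => [|vu]; [by left | right].
have [w wi] := Dmod_exists i; apply/existsP; exists w.
by rewrite wi ui (Dlevel_rank_Dmod wi (card_Dmod_gt1 ui vu)) leqnn.
Qed.

End Levels.

(** * The defining formula *)

Section SymmetricClosure.
Variable T : finType.
Implicit Types r : rel T.

Definition symr r : rel T := fun x y => r x y || r y x.

Lemma stc_relE r a b : stc_rel r a b = [exists c, symr r a c && connect (symr r) c b].
Proof. by []. Qed.

Lemma connect_symrE r a b : connect (symr r) a b = (a == b) || stc_rel r a b.
Proof.
apply/idP/orP => [|[/eqP-> //|/existsP[c /andP[rac ccb]]]]; last first.
  exact: connect_trans (connect1 (rac : symr r a c)) ccb.
case/connectP => -[_ ->|c p /= /andP[rac pc] ->]; first by left.
by right; apply/existsP; exists c; apply/andP; split=> //; apply/connectP; exists p.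
Qed.

Lemma symr_id r : symmetric r -> symr r =2 r.
Proof. by move=> r_sym x y; rewrite /symr r_sym orbb. Qed.

Lemma eq_stc_rel r1 r2 : r1 =2 r2 -> stc_rel r1 =2 stc_rel r2.
Proof.
move=> r12 a b; apply: eq_existsb => c; rewrite !r12.
by rewrite (@eq_connect _ _ (symr r2)) // => x y; rewrite /symr !r12.
Qed.

End SymmetricClosure.

Lemma stc_rel_inj (T1 T2 : finType) (h : T1 -> T2) (r1 : rel T1) (r2 : rel T2) :
  injective h -> (forall a b, r2 a b -> (exists p, a = h p) /\ (exists q, b = h q)) ->
  (forall p q, r2 (h p) (h q) = r1 p q) ->
  forall p q, stc_rel r2 (h p) (h q) = stc_rel r1 p q.
Proof.
move=> h_inj r2_img r12.
have s_img a b : symr r2 a b -> exists q, b = h q.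
  by case/orP => /r2_img[].
have s12 p q : symr r2 (h p) (h q) = symr r1 p q by rewrite /symr !r12.
have connect12 p q : connect (symr r2) (h p) (h q) = connect (symr r1) p q.
  apply/connectP/connectP => -[s]; last first.
    elim: s p => [|c s IH] p /= => [_ ->|/andP[pc cs] sq]; first by exists [::].
    have [s' ps' ->] := IH c cs sq.
    by exists (h c :: s'); rewrite /= ?s12 ?pc.
  elim: s p => [|c s IH] p /= => [_ /h_inj->|/andP[pc cs] sq]; first by exists [::].
  have [c' cc'] := s_img _ _ pc; subst c.
  have [s' ps' ->] := IH c' cs sq.
  by exists (c' :: s'); rewrite /= -?s12 ?pc.
move=> p q; rewrite !stc_relE; apply/existsP/existsP => -[c /andP[pc cq]].
  have [c' cc'] := s_img _ _ pc; subst c.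
  by exists c'; rewrite -s12 -connect12 pc.
by exists (h c); rewrite (s12 p c) connect12 pc.
Qed.

Definition FOr (f g : formula) := FNot (FAnd (FNot f) (FNot g)).
Definition FImp (f g : formula) := FOr (FNot f) g.
Definition FComplEdge (x y : nat) := FAnd (FNot (FEq x y)) (FNot (FEdge x y)).

(* These formulas bind the variables 100 to 104. *)
Definition Fedge_step (edge : nat -> nat -> formula) :=
  FAnd (edge 100 101) (FAnd (edge 102 103)
    (FOr (FAnd (FEq 100 102) (FAnd (FNot (FEq 101 103)) (FNot (edge 101 103))))
         (FAnd (FEq 100 103) (FEq 101 102)))).

Definition Fedge_closure edge x y z :=
  FOr (FEq z x) (FOr (FEq z y) (FExS 104 (FStc [:: inl 100; inl 101] [:: inl 102; inl 103]
      (Fedge_step edge) [:: inl x; inl y] [:: inl z; inl 104]))).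

Definition Fmspan x y z :=
  FOr (FAnd (FEq x y) (FEq z x))
   (FOr (FAnd (FNot (FEq x y)) (FAnd (FEdge x y) (Fedge_closure FEdge x y z)))
        (FAnd (FNot (FEq x y)) (FAnd (FNot (FEdge x y)) (Fedge_closure FComplEdge x y z)))).

Definition FDlevel v w y := FImp (Fmspan v y w) (Fmspan v w y).

(* The two counting formulas bind the variables 50 to 53. *)
Definition FDlevel_card v w q := FCount [:: inl 50] (FDlevel v w 50) [:: q].

Definition FDlevel_rank v w r :=
  FCount [:: inr 51] (FAnd (FExS 52 (FDlevel_card v 52 51))
                           (FExN 53 (FAnd (FDlevel_card v w 53) (FNot (FLe 51 53))))) [:: r].

Definition phiD :=
  FOr (FEq 0 1) (FExS 2 (FAnd (FDlevel 0 2 1) (FExN 2 (FAnd (FDlevel_rank 0 2 2) (FLe 0 2))))).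

Section Semantics.
Variables (V : finType) (E : rel V).
Implicit Types (sa : nat -> V) (na : nat -> num V).

Lemma upd_same (T : Type) (f : nat -> T) k a : upd f k a k = a.
Proof. by rewrite /upd eqxx. Qed.

Lemma upd_other (T : Type) (f : nat -> T) k a x : x != k -> upd f k a x = f x.
Proof. by move=> xk; rewrite /upd (negbTE xk). Qed.

Lemma eval_FOr f g sa na : eval E (FOr f g) sa na = eval E f sa na || eval E g sa na.
Proof. by rewrite /= negb_and !negbK. Qed.

Lemma eval_FImp f g sa na : eval E (FImp f g) sa na = eval E f sa na ==> eval E g sa na.
Proof. by rewrite eval_FOr /= implybE. Qed.

Lemma eval_FAnd f g sa na : eval E (FAnd f g) sa na = eval E f sa na && eval E g sa na.
Proof. by []. Qed.

Lemma eval_FExS x f sa na : eval E (FExS x f) sa na = [exists a, eval E f (upd sa x a) na].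
Proof. by []. Qed.

Lemma eval_FExN p f sa na : eval E (FExN p f) sa na = [exists k, eval E f sa (upd na p k)].
Proof. by []. Qed.

Definition pair2 (p : V * V) : 2.-tuple (dval V) := [tuple inl p.1; inl p.2].

Lemma pair2_inj : injective pair2.
Proof. by move=> [a b] [c d] /(congr1 val) [-> ->]. Qed.

Lemma wellsorted_pair2 x y (a : 2.-tuple (dval V)) :
  wellsorted [:: inl x; inl y] a -> exists p, a = pair2 p.
Proof.
case: a => [[|[a1|?] [|[a2|?] []]] //= a_size] _.
by exists (a1, a2); apply/val_inj.
Qed.

Lemma stc_rel_pair2 (R : rel (2.-tuple (dval V))) (r : rel (V * V)) a b c d :
  (forall s t, R s t -> (exists p, s = pair2 p) /\ (exists q, t = pair2 q)) ->
  (forall p q, R (pair2 p) (pair2 q) = r p q) ->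
  [exists s : 2.-tuple (dval V), exists t : 2.-tuple (dval V),
    [&& val s == [:: inl a; inl b], val t == [:: inl c; inl d] & stc_rel R s t]]
  = stc_rel r (a, b) (c, d).
Proof.
move=> R_img Rr; rewrite -(stc_rel_inj pair2_inj R_img Rr).
apply/existsP/idP => [[s /existsP[t /and3P[/eqP sE /eqP tE st]]]|st].
  have -> : pair2 (a, b) = s by apply/val_inj; rewrite sE.
  by have -> : pair2 (c, d) = t by apply/val_inj; rewrite tE.
by exists (pair2 (a, b)); apply/existsP; exists (pair2 (c, d)); rewrite !eqxx.
Qed.

Lemma eval_FStc2 x y x' y' g a b c d sa na :
  eval E (FStc [:: inl x; inl y] [:: inl x'; inl y'] g [:: inl a; inl b] [:: inl c; inl d]) sa na =
  stc_rel (fun p q : V * V => eval E g (upd (upd (upd (upd sa x p.1) y p.2) x' q.1) y' q.2) na)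
    (sa a, sa b) (sa c, sa d).
Proof.
by apply: stc_rel_pair2 => // s t /and3P[/wellsorted_pair2 ? /wellsorted_pair2 ? _].
Qed.

Lemma mem_edge_closure_stc (e : rel V) x y z : symmetric e ->
  (z \in edge_closure e x y) =
  [|| z == x, z == y | [exists t, stc_rel (edge_step e) (x, y) (z, t)]].
Proof.
move=> e_sym; rewrite inE; case: (eqVneq z x) => //= zx; congr (_ || _).
apply: eq_existsb => t.
rewrite -(eq_connect (symr_id (edge_step_sym e_sym))) connect_symrE xpair_eqE.
by rewrite eq_sym (negbTE zx).
Qed.

Lemma eval_Fedge_step edge (e : rel V) sa na :
  (forall a b sa na, eval E (edge a b) sa na = e (sa a) (sa b)) ->
  eval E (Fedge_step edge) sa na = edge_step e (sa 100, sa 101) (sa 102, sa 103).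
Proof. by move=> edgeE; rewrite /Fedge_step /= !edgeE /edge_step /= negb_and !negbK !andbA. Qed.

Lemma eval_Fedge_closure edge (e : rel V) x y z sa na : symmetric e ->
  (forall a b sa na, eval E (edge a b) sa na = e (sa a) (sa b)) ->
  x < 100 -> y < 100 -> z < 100 ->
  eval E (Fedge_closure edge x y z) sa na = (sa z \in edge_closure e (sa x) (sa y)).
Proof.
move=> e_sym edgeE x100 y100 z100; have fresh k : k < 100 -> k != 104 by move=> ?; lia.
rewrite mem_edge_closure_stc // /Fedge_closure !eval_FOr eval_FExS; congr [|| _, _ | _].
apply: eq_existsb => t; rewrite eval_FStc2 upd_same !upd_other ?fresh //.
by apply: eq_stc_rel => -[p1 p2] [q1 q2]; rewrite (eval_Fedge_step _ _ edgeE) /upd /=.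
Qed.

Lemma eval_Fmspan x y z sa na : symmetric E -> x < 100 -> y < 100 -> z < 100 ->
  eval E (Fmspan x y z) sa na = (sa z \in mspan E (sa x) (sa y)).
Proof.
move=> E_sym x100 y100 z100; rewrite /Fmspan !eval_FOr !eval_FAnd.
rewrite (eval_Fedge_closure (e := E)) // (eval_Fedge_closure (e := compl E)) //=; last first.
  exact: (compl_sym E_sym).
rewrite /mspan; case: eqP => [->|_] /=; first by rewrite inE orbF.
by case: ifP; rewrite /= ?orbF.
Qed.

Lemma eval_FDlevel v w y sa na : symmetric E -> v < 100 -> w < 100 -> y < 100 ->
  eval E (FDlevel v w y) sa na = (sa y \in Dlevel E (sa v) (sa w)).
Proof. by move=> E_sym *; rewrite /FDlevel eval_FImp !eval_Fmspan // inE. Qed.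

Lemma card_assign_inl x (P : (nat -> V) -> (nat -> num V) -> bool) sa na :
  #|[pred t : (size [:: (inl x : var)]).-tuple (dval V) | wellsorted [:: inl x] t &&
      P (assign [:: inl x] t sa na).1 (assign [:: inl x] t sa na).2]| =
  #|[pred a : V | P (upd sa x a) na]|.
Proof.
pose g (a : V) := [tuple (inl a : dval V)].
have g_inj : injective g by move=> a b /(congr1 val) [].
have -> : #|[pred a : V | P (upd sa x a) na]| = #|g @: [set a | P (upd sa x a) na]|.
  by rewrite card_imset //; apply: eq_card => a; rewrite inE.
apply: eq_card => t; rewrite !inE; case: t => -[|[a|k] []] //= t_size.
  apply/idP/imsetP => [Pa|[b]]; last by rewrite inE => Pb /(congr1 val) [->].
  by exists a; rewrite ?inE //; apply/val_inj.
by apply/esym/negbTE/imsetP => -[b _ /(congr1 val) []].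
Qed.

Lemma card_assign_inr p (P : (nat -> V) -> (nat -> num V) -> bool) sa na :
  #|[pred t : (size [:: (inr p : var)]).-tuple (dval V) | wellsorted [:: inr p] t &&
      P (assign [:: inr p] t sa na).1 (assign [:: inr p] t sa na).2]| =
  #|[pred k : num V | P sa (upd na p k)]|.
Proof.
pose g (k : num V) := [tuple (inr k : dval V)].
have g_inj : injective g by move=> a b /(congr1 val) [].
have -> : #|[pred k : num V | P sa (upd na p k)]| = #|g @: [set k | P sa (upd na p k)]|.
  by rewrite card_imset //; apply: eq_card => k; rewrite inE.
apply: eq_card => t; rewrite !inE; case: t => -[|[a|k] []] //= t_size.
  by apply/esym/negbTE/imsetP => -[b _ /(congr1 val) []].
apply/idP/imsetP => [Pk|[b]]; last by rewrite inE => Pb /(congr1 val) [->].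
by exists k; rewrite ?inE //; apply/val_inj.
Qed.

Lemma eval_FCount1 u f q sa na : eval E (FCount [:: u] f [:: q]) sa na =
  (#|[pred t : (size [:: u]).-tuple (dval V) |
       wellsorted [:: u] t && eval E f (assign [:: u] t sa na).1 (assign [:: u] t sa na).2]|
   == na q).
Proof. by rewrite /= big_ord1 expn0 muln1. Qed.

Lemma eval_FDlevel_card v w q sa na : symmetric E -> v < 100 -> w < 100 -> v != 50 -> w != 50 ->
  eval E (FDlevel_card v w q) sa na = (#|Dlevel E (sa v) (sa w)| == na q).
Proof.
move=> E_sym v100 w100 v50 w50; rewrite /FDlevel_card eval_FCount1 card_assign_inl; congr (_ == _).
by apply: eq_card => a; rewrite [in LHS]inE eval_FDlevel // upd_same !upd_other.
Qed.

Lemma eval_FDlevel_rank v w r sa na : symmetric E -> v < 50 -> w < 50 ->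
  eval E (FDlevel_rank v w r) sa na = (Dlevel_rank E (sa v) (sa w) == na r).
Proof.
move=> E_sym v50 w50; have [v100 w100 v_50 w_50] : [/\ v < 100, w < 100, v != 50 & w != 50].
  by split; lia.
rewrite /FDlevel_rank eval_FCount1 card_assign_inr; congr (_ == _).
apply: eq_card => k; rewrite [in LHS]inE eval_FAnd eval_FExS eval_FExN; congr (_ && _).
  apply: eq_existsb => a.
  by rewrite eval_FDlevel_card // upd_same upd_other ?upd_same //; lia.
apply/existsP/idP => [[k']|lt].
  by rewrite eval_FAnd eval_FDlevel_card //= /upd /= ltnNge => /andP[/eqP->].
exists (inord #|Dlevel E (sa v) (sa w)|).
by rewrite eval_FAnd eval_FDlevel_card //= /upd /= inordK ?eqxx -?ltnNge // ltnS max_card.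
Qed.

Lemma eval_phiD sa na : symmetric E ->
  eval E phiD sa na = (sa 0 == sa 1) ||
    [exists w, (sa 1 \in Dlevel E (sa 0) w) && (na 0 <= Dlevel_rank E (sa 0) w)].
Proof.
move=> E_sym; rewrite /phiD eval_FOr eval_FExS; congr (_ || _); apply: eq_existsb => w.
rewrite eval_FAnd eval_FDlevel // eval_FExN; congr (_ && _).
apply/existsP/idP => [[r]|le].
  by rewrite eval_FAnd eval_FDlevel_rank //= /upd /= => /andP[/eqP->].
exists (inord (Dlevel_rank E (sa 0) w)).
by rewrite eval_FAnd eval_FDlevel_rank //= /upd /= inordK ?eqxx // ltnS Dlevel_rank_le.
Qed.

End Semantics.

Theorem theorem3p16 :
  exists phi : formula,
    {subset fv phi <= [:: inr 0; inl 0; inl 1]} /\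
    forall (V : finType) (E : rel V),
      irreflexive E -> symmetric E -> (0 < #|V|)%N ->
      forall (i : num V) (v u : V) (sa : nat -> V) (na : nat -> num V),
        sa 0%N = v -> sa 1%N = u -> na 0%N = i ->
        eval E phi sa na = (u \in Dmod E i v).
Proof.
exists phiD; split.
  by apply/allP; vm_compute.
move=> V E _ E_sym _ i v u sa na <- <- <-.
by rewrite eval_phiD // mem_Dmod_Dlevel.
Qed.
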